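(* Let $d\in\mathbb{N}$ and $m_1,\dots,m_{2d}\in\mathbb{Z}$ with $m_i>0$ for all $i\neq 2d$ and $m_{2d}\geq 0$. Then $\mathsf{C}\mathsf{W}(m_1,\dots,m_{2d})\mathsf{E}$ has five distinct real eigenvalues whose absolute values are also pairwise distinct, and the eigenvalue of largest absolute value is $$s+\tfrac12\sqrt{5s^2+4ts+4}+\tfrac12\sqrt{9s^2+4ts+4s\sqrt{5s^2+4ts+4}},$$ where $t=\operatorname{tr}(W_1(m_1,\dots,m_{2d}))$ and $s=\operatorname{tr}^*(W_1(m_1,\dots,m_{2d}))$.
   Context: $A_1=\begin{pmatrix}1&1\\0&1\end{pmatrix}$, $B_1=\begin{pmatrix}1&0\\1&1\end{pmatrix}$, $W_1(m_1,\dots,m_{2d})=\prod_{i=1}^dA_1^{m_{2i-1}}B_1^{m_{2i}}$. Let $\mathsf{A}=\begin{pmatrix}1&1&0&0&2\\0&1&0&0&0\\0&0&1&1&0\\0&0&0&1&0\\0&0&0&0&1\end{pmatrix}$, $\mathsf{B}=\begin{pmatrix}1&0&0&0&0\\1&1&0&0&0\\0&0&1&0&0\\0&0&1&1&2\\0&0&0&0&1\end{pmatrix}$, $\mathsf{C}=\begin{pmatrix}1&0&0&0&0\\0&1&0&0&0\\0&0&1&0&0\\0&0&0&1&0\\2&0&0&2&1\end{pmatrix}$, $\mathsf{E}=\begin{pmatrix}0&0&0&1&0\\0&0&1&0&0\\0&1&0&0&0\\1&0&0&0&0\\0&0&0&0&1\end{pmatrix}$, and $\mathsf{W}(m_1,\dots,m_{2d})=\prod_{i=1}^d\mathsf{A}^{m_{2i-1}}\mathsf{B}^{m_{2i}}$.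 $\operatorname{tr}^*(M)=M_{1,2}+M_{2,1}$ is the anti-trace. *)

From mathcomp Require Import all_boot all_order all_algebra.
From mathcomp Require Import reals.
Set Implicit Arguments. Unset Strict Implicit. Unset Printing Implicit Defensive.
Import Order.TTheory GRing.Theory Num.Theory.
Local Open Scope ring_scope.

Section Mats.
Variable R : realType.

Definition mx_of_rows (n : nat) (l : seq (seq nat)) : 'M[R]_n :=
  \matrix_(i < n, j < n) (nth 0%N (nth [::] l i) j)%:R.

Definition A1 : 'M[R]_2 := mx_of_rows 2 [:: [:: 1; 1]; [:: 0; 1]]%N.
Definition B1 : 'M[R]_2 := mx_of_rows 2 [:: [:: 1; 0]; [:: 1; 1]]%N.

Definition mA : 'M[R]_5 := mx_of_rows 5
  [:: [:: 1; 1; 0; 0; 2]; [:: 0; 1; 0; 0; 0]; [:: 0; 0; 1; 1; 0];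
      [:: 0; 0; 0; 1; 0]; [:: 0; 0; 0; 0; 1]]%N.
Definition mB : 'M[R]_5 := mx_of_rows 5
  [:: [:: 1; 0; 0; 0; 0]; [:: 1; 1; 0; 0; 0]; [:: 0; 0; 1; 0; 0];
      [:: 0; 0; 1; 1; 2]; [:: 0; 0; 0; 0; 1]]%N.
Definition mC : 'M[R]_5 := mx_of_rows 5
  [:: [:: 1; 0; 0; 0; 0]; [:: 0; 1; 0; 0; 0]; [:: 0; 0; 1; 0; 0];
      [:: 0; 0; 0; 1; 0]; [:: 2; 0; 0; 2; 1]]%N.
Definition mE : 'M[R]_5 := mx_of_rows 5
  [:: [:: 0; 0; 0; 1; 0]; [:: 0; 0; 1; 0; 0]; [:: 0; 1; 0; 0; 0];
      [:: 1; 0; 0; 0; 0]; [:: 0; 0; 0; 0; 1]]%N.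

(* The exponent sequence m_1,...,m_{2d} is given 0-indexed: m k = m_{k+1}. *)
Definition W1 (d : nat) (m : nat -> nat) : 'M[R]_2 :=
  \prod_(i < d) (A1 ^+ m (2 * i)%N *m B1 ^+ m (2 * i).+1).
Definition W5 (d : nat) (m : nat -> nat) : 'M[R]_5 :=
  \prod_(i < d) (mA ^+ m (2 * i)%N *m mB ^+ m (2 * i).+1).

Definition antitr (M : 'M[R]_2) : R := M 0 1 + M 1 0.

End Mats.

From mathcomp Require Import all_boot all_order all_algebra.
From mathcomp Require Import reals.
From mathcomp.algebra_tactics Require Import ring lra.
Set Implicit Arguments. Unset Strict Implicit. Unset Printing Implicit Defensive.
Import Order.TTheory GRing.Theory Num.Theory.
Local Open Scope ring_scope.

(* 1. The map lift5 : 'M_2 -> 'M_5 sending X = [[a, b], [c, e]] to an explicit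
      5 x 5 matrix is multiplicative, sends A_1, B_1 to A, B, hence sends the
      2 x 2 word W_1(m) to the 5 x 5 word W(m).
   2. C (lift5 X) E is conjugate, by a fixed matrix S of determinant 1, to an
      explicit matrix K(a, b, c, e).  When det X = 1 its characteristic
      polynomial is (x - 1) Q(x), with Q the palindromic quartic
      x^4 - 4s x^3 - (s^2 + 4ts + 2) x^2 - 4s x + 1,  s = b + c,  t = a + e.
   3. Positive SL_2 matrices (det 1, diagonal >= 1, off-diagonal >= 0) are
      closed under products; A_1, B_1 are such, so s >= 1 and t >= 2.
   4. For s >= 1, t >= 2, Q splits as a product of two reciprocal quadratics
      x^2 - (2s +- q) x + 1 with q = sqrt(5s^2 + 4ts + 4); their roots
      x1 > 1 > x2 > 0 and x4 < -1 < x3 < 0 satisfy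
      x1 > |x4| > 1 > |x3| > x2, which gives the theorem. *)

Section Laplace.
Variable R : comNzRingType.

Definition mxN n (F : nat -> nat -> R) : 'M[R]_n := \matrix_(i < n, j < n) F i j.

(* Alternating sum g 0 - g 1 + g 2 - ...; a plain fixpoint, so that it
   unfolds by simplification for concrete lengths. *)
Fixpoint altsum (k : nat) (g : nat -> R) : R :=
  if k is k'.+1 then altsum k' g + (-1) ^+ k' * g k' else 0.

Lemma altsumE k g : altsum k g = \sum_(j < k) (-1) ^+ j * g j.
Proof. by elim: k => [|k IHk]; rewrite ?big_ord0 // big_ord_recr /= IHk. Qed.

Fixpoint laplace (n : nat) (F : nat -> nat -> R) : R :=
  if n is n'.+1 then
    altsum n (fun j => F 0%N j * laplace n' (fun k l => F (bump 0 k) (bump j l)))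
  else 1.

(* The determinant of a concrete small matrix reduces, by simplification, to
   an explicit polynomial expression in its entries. *)
Lemma det_laplace n F : \det (mxN n F) = laplace n F.
Proof.
elim: n F => [|n IHn] F; first by rewrite det_mx00.
rewrite (expand_det_row _ ord0) [RHS]/laplace -/laplace altsumE.
apply: eq_bigr => j _; rewrite /cofactor mxE -IHn add0n mulrCA.
by congr (_ * (_ * \det _)); apply/matrixP => k l; rewrite !mxE.
Qed.

Lemma mul_mx2 (X Y : 'M[R]_2) i j : (X *m Y) i j = X i 0 * Y 0 j + X i 1 * Y 1 j.
Proof.
rewrite mxE !big_ord_recl big_ord0 addr0.
by congr (_ * _ + _ * _); congr (_ _ _); apply: val_inj.
Qed.

Lemma det_mx2 (X : 'M[R]_2) : \det X = X 0 0 * X 1 1 - X 0 1 * X 1 0.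
Proof.
have -> : X = mxN 2 (fun i j => X (inord i) (inord j)).
  by apply/matrixP => i j; rewrite mxE !inord_val.
rewrite det_laplace /= !mxE /bump /=.
have -> : inord 0 = 0 :> 'I_2 by apply: val_inj => /=; rewrite inordK.
have -> : inord 1 = 1 :> 'I_2 by apply: val_inj => /=; rewrite inordK.
ring.
Qed.

Lemma trace_mx2 (X : 'M[R]_2) : \tr X = X 0 0 + X 1 1.
Proof.
rewrite /mxtrace !big_ord_recl big_ord0 addr0.
by congr (X _ _ + X _ _); apply: val_inj.
Qed.
End Laplace.

Lemma eigenvalue_det (F : fieldType) n (g : 'M[F]_n) a :
  eigenvalue g a = (\det (a%:M - g) == 0).
Proof.
apply/eigenvalueP/det0P => [[v gv v_nz] | [v v_nz gv]]; exists v => //.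
  by rewrite mulmxBr gv mul_mx_scalar subrr.
by apply/eqP; rewrite -mul_mx_scalar eq_sym -subr_eq0 -mulmxBr gv.
Qed.

Lemma det_shift_similar (F : fieldType) n (M K S : 'M[F]_n) (x : F) :
  \det S != 0 -> M *m S = S *m K -> \det (x%:M - M) = \det (x%:M - K).
Proof.
move=> hS hMS; apply: (mulIf hS); rewrite -det_mulmx mulrC -det_mulmx.
by rewrite mulmxBl mulmxBr hMS mul_scalar_mx mul_mx_scalar.
Qed.

Ltac case_ord i := let H := fresh in case: i => [[|[|[|[|[|?]]]]] H] //=.

Section Lift.
Variable R : comNzRingType.

Definition lift_entry (a b c e : R) (i j : nat) : R :=
  match i, j with
  | 0%N, 0%N => a | 0%N, 1%N => b | 0%N, 4%N => 2 * b
  | 1%N, 0%N => c | 1%N, 1%N => e | 1%N, 4%N => 2 * (e - 1)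
  | 2%N, 2%N => a | 2%N, 3%N => b | 2%N, 4%N => 2 * (a - 1)
  | 3%N, 2%N => c | 3%N, 3%N => e | 3%N, 4%N => 2 * c
  | 4%N, 4%N => 1 | _, _ => 0 end.

Definition lift5 (X : 'M[R]_2) : 'M[R]_5 :=
  mxN 5 (lift_entry (X 0 0) (X 0 1) (X 1 0) (X 1 1)).

Lemma lift5_1 : lift5 1 = 1.
Proof. by apply/matrixP => i j; rewrite !mxE /=; case_ord i; case_ord j; ring. Qed.

Lemma lift5M (X Y : 'M[R]_2) : lift5 (X *m Y) = lift5 X *m lift5 Y.
Proof.
apply/matrixP => i j; rewrite [LHS]mxE !mul_mx2 mxE !big_ord_recl big_ord0 !mxE /=.
by case_ord i; case_ord j; ring.
Qed.

Lemma lift5X (X : 'M[R]_2) k : lift5 (X ^+ k) = lift5 X ^+ k.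
Proof.
elim: k => [|k IHk]; first by rewrite !expr0 lift5_1.
by rewrite !exprS -!mulmxE lift5M IHk.
Qed.
End Lift.

Section Conjugation.
Variable R : comNzRingType.

Definition mx5 (l : seq (seq R)) : 'M[R]_5 := mxN 5 (fun i j => nth 0 (nth [::] l i) j).

Definition charQ (s t x : R) : R :=
  x ^+ 4 - 4 * s * x ^+ 3 - (s ^+ 2 + 4 * t * s + 2) * x ^+ 2 - 4 * s * x + 1.

(* C (lift5 [[a, b], [c, e]]) E, written out. *)
Definition CWEmx (a b c e : R) : 'M[R]_5 := mx5
  [:: [:: 0; 0; b; a; 2 * b]; [:: 0; 0; e; c; 2 * (e - 1)];
      [:: b; a; 0; 0; 2 * (a - 1)]; [:: e; c; 0; 0; 2 * c];
      [:: 2 * e; 2 * c; 2 * b; 2 * a; 4 * b + 4 * c + 1]].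

(* The base change and the conjugate matrix whose characteristic polynomial
   is easy to expand. *)
Definition Smx : 'M[R]_5 := mx5
  [:: [:: 1; 0; 0; 0; 0]; [:: 0; 1; 0; 0; -2]; [:: 0; 0; 1; 0; -2];
      [:: 0; 0; 0; 1; 0]; [:: 2; 0; 0; 2; 1]].

Definition Kmx (a b c e : R) : 'M[R]_5 := mx5
  [:: [:: 4 * b; 0; b; a + 4 * b; 0]; [:: 4 * e; 0; e; c + 4 * e; 0];
      [:: 4 * a + b; a; 0; 4 * a; 0]; [:: 4 * c + e; c; 0; 4 * c; 0];
      [:: 2; 0; 0; 2; 1]].

Lemma det_Smx : \det Smx = 1.
Proof. by rewrite det_laplace /=; ring. Qed.

Lemma conj_Kmx (a b c e : R) : CWEmx a b c e *m Smx = Smx *m Kmx a b c e.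
Proof.
apply/matrixP => i j; rewrite /CWEmx /Smx /Kmx /mx5 /mxN.
rewrite !(big_ord_recl, big_ord0, mxE) /=.
by case_ord i; case_ord j; ring.
Qed.

Lemma scalar_sub_mxN n (x : R) F :
  x%:M - mxN n F = mxN n (fun i j => (i == j)%:R * x - F i j).
Proof. by apply/matrixP => i j; rewrite !mxE mulr_natl. Qed.

(* Characteristic polynomial of Kmx: the defect from (x - 1) charQ is a
   multiple of ae - bc - 1. *)
Lemma det_Kmx (a b c e x : R) : a * e - b * c = 1 ->
  \det (x%:M - Kmx a b c e) = (x - 1) * charQ (b + c) (a + e) x.
Proof.
move=> hdet; rewrite scalar_sub_mxN det_laplace /=.
transitivity ((x - 1) * charQ (b + c) (a + e) x
  + (a * e - b * c - 1) * (x - 1) * (a * e - b * c + 1 - 4 * (b + c) * x - 2 * x ^+ 2)).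
  by rewrite /charQ; ring.
by rewrite hdet subrr !mul0r addr0.
Qed.
End Conjugation.

Section Words.
Variable R : realType.

Lemma lift5_A1 : lift5 (A1 R) = mA R.
Proof.
apply/matrixP => i j; rewrite /A1 /mA /mx_of_rows !mxE /=.
by case_ord i; case_ord j; ring.
Qed.

Lemma lift5_B1 : lift5 (B1 R) = mB R.
Proof.
apply/matrixP => i j; rewrite /B1 /mB /mx_of_rows !mxE /=.
by case_ord i; case_ord j; ring.
Qed.

Lemma W5_lift d m : W5 R d m = lift5 (W1 R d m).
Proof.
rewrite /W5 /W1 (big_morph _ (@lift5M R) (lift5_1 R)).
by apply: eq_bigr => i _; rewrite lift5M !lift5X lift5_A1 lift5_B1.
Qed.

Lemma CWE_lift5 (X : 'M[R]_2) :
  mC R *m lift5 X *m mE R = CWEmx (X 0 0) (X 0 1) (X 1 0) (X 1 1).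
Proof.
apply/matrixP => i j; rewrite /CWEmx /mx5 /mxN /lift5 /mC /mE /mx_of_rows.
rewrite !(big_ord_recl, big_ord0, mxE) /=.
by case_ord i; case_ord j; ring.
Qed.

Lemma char_CWE (X : 'M[R]_2) (x : R) : \det X = 1 ->
  \det (x%:M - mC R *m lift5 X *m mE R) = (x - 1) * charQ (antitr X) (\tr X) x.
Proof.
move=> hX; rewrite CWE_lift5 (det_shift_similar _ _ (conj_Kmx _ _ _ _)).
  by rewrite det_Kmx -?det_mx2 // trace_mx2 /antitr addrC.
by rewrite det_Smx oner_eq0.
Qed.
End Words.

Section PositiveSL2.
Variable R : realDomainType.

Definition posSL2 (X : 'M[R]_2) : Prop :=
  [/\ \det X = 1, 1 <= X 0 0, 1 <= X 1 1, 0 <= X 0 1 & 0 <= X 1 0].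

Lemma posSL2_1 : posSL2 1.
Proof. by split; rewrite ?det1 // !mxE /= ?lexx ?ler01. Qed.

Lemma posSL2M X Y : posSL2 X -> posSL2 Y -> posSL2 (X *m Y).
Proof.
case=> [dX ? ? ? ?] [dY ? ? ? ?].
by split; rewrite ?det_mulmx ?dX ?dY ?mulr1 // !mul_mx2; nra.
Qed.

Lemma posSL2X X k : posSL2 X -> posSL2 (X ^+ k).
Proof.
move=> hX; elim: k => [|k IHk]; first by rewrite expr0; exact: posSL2_1.
by rewrite exprS -mulmxE; apply: posSL2M.
Qed.

Lemma posSL2_corner X Y : posSL2 X -> posSL2 Y -> 1 <= X 0 1 -> 1 <= (X *m Y) 0 1.
Proof. by case=> [? ? ? ? ?] [? ? ? ? ?] ?; rewrite mul_mx2; nra. Qed.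
End PositiveSL2.

Section PositiveWords.
Variable R : realType.

Lemma posSL2_A1 : posSL2 (A1 R).
Proof. by split; rewrite ?det_mx2 /A1 /mx_of_rows !mxE //= ?lexx ?ler01; ring. Qed.

Lemma posSL2_B1 : posSL2 (B1 R).
Proof. by split; rewrite ?det_mx2 /B1 /mx_of_rows !mxE //= ?lexx ?ler01; ring. Qed.

Lemma A1X_corner k : (0 < k)%N -> 1 <= (A1 R ^+ k) 0 1.
Proof.
case: k => // k _; rewrite exprS -mulmxE; apply: posSL2_corner.
- exact: posSL2_A1.
- exact: posSL2X posSL2_A1.
- by rewrite /A1 /mx_of_rows mxE.
Qed.

Lemma W1_pos d m : (0 < d)%N -> (0 < m 0%N)%N ->
  posSL2 (W1 R d m) /\ 1 <= W1 R d m 0 1.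
Proof.
case: d => // d _ hm.
have pos_factor i : posSL2 (A1 R ^+ m (2 * i)%N *m B1 R ^+ m (2 * i).+1).
  by apply: posSL2M; apply: posSL2X; [exact: posSL2_A1 | exact: posSL2_B1].
set rest := \prod_(i < d) (A1 R ^+ m (2 * lift ord0 i)%N *m
                            B1 R ^+ m (2 * lift ord0 i).+1).
have pos_rest : posSL2 rest.
  apply: (big_ind (@posSL2 R)) => [|X Y|i _]; first exact: posSL2_1.
    by rewrite -mulmxE; apply: posSL2M.
  exact: pos_factor.
have -> : W1 R d.+1 m = (A1 R ^+ m 0%N *m B1 R ^+ m 1%N) *m rest.
  by rewrite /W1 big_ord_recl.
split; first by apply: posSL2M; [exact: (pos_factor 0%N) |].
apply: posSL2_corner (pos_factor 0%N) pos_rest _; apply: posSL2_corner.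
- exact: posSL2X posSL2_A1.
- exact: posSL2X posSL2_B1.
- exact: A1X_corner.
Qed.
End PositiveWords.

Lemma recip_quadratic (R : numFieldType) (p r z : R) : r ^+ 2 = p ^+ 2 - 4 ->
  z ^+ 2 - p * z + 1 = (z - (p + r) / 2) * (z - (p - r) / 2).
Proof.
move=> hr; transitivity ((z - (p + r) / 2) * (z - (p - r) / 2)
  + (r ^+ 2 - (p ^+ 2 - 4)) / 4); first by field.
by rewrite hr subrr mul0r addr0.
Qed.

Lemma charQ_factor (R : comNzRingType) (s t q z : R) :
  q ^+ 2 = 5 * s ^+ 2 + 4 * t * s + 4 ->
  charQ s t z = (z ^+ 2 - (2 * s + q) * z + 1) * (z ^+ 2 - (2 * s - q) * z + 1).
Proof.
move=> hq; transitivity ((z ^+ 2 - (2 * s + q) * z + 1) * (z ^+ 2 - (2 * s - q) * z + 1)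
  + (q ^+ 2 - (5 * s ^+ 2 + 4 * t * s + 4)) * z ^+ 2); first by rewrite /charQ; ring.
by rewrite hq subrr mul0r addr0.
Qed.

Lemma five_roots (R : realFieldType) (P : pred R) (x1 x2 x3 x4 : R) :
  - x4 < x1 -> 1 < - x4 -> - x3 < 1 -> x2 < - x3 -> 0 < x2 ->
  (forall z, P z = ((z - 1) * (z - x1) * (z - x2) * (z - x3) * (z - x4) == 0)) ->
  exists lam : 'I_5 -> R,
    [/\ injective lam, (forall i, P (lam i)),
        (forall a, P a -> exists i, a = lam i),
        injective (fun i => `|lam i|) &
        exists i0, (forall i, `|lam i| <= `|lam i0|) /\ lam i0 = x1].
Proof.
move=> h14 h4 h3 h23 h2 hP.
have n1 : `|x1| = x1 by rewrite ger0_norm //; lra.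
have n2 : `|x2| = x2 by rewrite ger0_norm //; lra.
have n3 : `|x3| = - x3 by rewrite ler0_norm //; lra.
have n4 : `|x4| = - x4 by rewrite ler0_norm //; lra.
pose lam (i : 'I_5) := nth 0 [:: x1; x4; 1; x3; x2] i.
have inj_abs : injective (fun i => `|lam i|).
  move=> i j; rewrite /lam; case_ord i; case_ord j; rewrite ?normr1 ?n1 ?n2 ?n3 ?n4 => h;
    try (by apply: val_inj); exfalso; lra.
exists lam; split => //.
- by move=> i j h; apply: inj_abs; rewrite /= h.
- by move=> i; rewrite hP /lam; case_ord i; rewrite subrr !(mulr0, mul0r).
- move=> a; rewrite hP !mulf_eq0 !subr_eq0.
  case/orP=> [/orP[/orP[/orP[|]|]|]|] /eqP ->.
  + by exists (@Ordinal 5 2 isT).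
  + by exists (@Ordinal 5 0 isT).
  + by exists (@Ordinal 5 4 isT).
  + by exists (@Ordinal 5 3 isT).
  + by exists (@Ordinal 5 1 isT).
- exists (@Ordinal 5 0 isT); split => // i.
  by rewrite /lam; case_ord i; rewrite ?normr1 ?n1 ?n2 ?n3 ?n4; lra.
Qed.

(* The zero set of (x - 1) charQ s t x for s >= 1, t >= 2: the roots of the
   two reciprocal quadratics x^2 - (2s +- q) x + 1 interlace in absolute
   value, because 2s + 2 < q and each pair of roots has product 1. *)
Lemma spectrum_charQ (R : rcfType) (s t : R) (P : pred R) :
  1 <= s -> 2 <= t -> (forall z, P z = ((z - 1) * charQ s t z == 0)) ->
  let q := Num.sqrt (5 * s ^+ 2 + 4 * t * s + 4) in
  exists lam : 'I_5 -> R,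
    [/\ injective lam, (forall i, P (lam i)),
        (forall a, P a -> exists i, a = lam i),
        injective (fun i => `|lam i|) &
        exists i0, (forall i, `|lam i| <= `|lam i0|) /\
          lam i0 = s + q / 2 + Num.sqrt (9 * s ^+ 2 + 4 * t * s + 4 * s * q) / 2].
Proof.
move=> hs ht hP q.
have q_ge0 : 0 <= q := sqrtr_ge0 _.
have q_sq : q ^+ 2 = 5 * s ^+ 2 + 4 * t * s + 4 by rewrite sqr_sqrtr //; nra.
have q_gt : 2 * s + 2 < q by nra.
pose r1 := Num.sqrt ((2 * s + q) ^+ 2 - 4).
pose r2 := Num.sqrt ((2 * s - q) ^+ 2 - 4).
have r1_ge0 : 0 <= r1 := sqrtr_ge0 _.
have r2_ge0 : 0 <= r2 := sqrtr_ge0 _.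
have r1_sq : r1 ^+ 2 = (2 * s + q) ^+ 2 - 4 by rewrite sqr_sqrtr //; nra.
have r2_sq : r2 ^+ 2 = (2 * s - q) ^+ 2 - 4 by rewrite sqr_sqrtr //; nra.
have r21 : r2 < r1 by nra.
pose x1 := (2 * s + q + r1) / 2; pose x2 := (2 * s + q - r1) / 2.
pose x3 := (2 * s - q + r2) / 2; pose x4 := (2 * s - q - r2) / 2.
have x12 : x1 * x2 = 1 by rewrite /x1 /x2; nra.
have x34 : x3 * x4 = 1 by rewrite /x3 /x4; nra.
have h14 : - x4 < x1 by rewrite /x1 /x4; lra.
have h4 : 1 < - x4 by rewrite /x4; lra.
have [h2 h3] : 0 < x2 /\ - x3 < 1 by split; nra.
have h23 : x2 < - x3 by nra.
have roots z : P z = ((z - 1) * (z - x1) * (z - x2) * (z - x3) * (z - x4) == 0).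
  rewrite hP (charQ_factor _ q_sq) (recip_quadratic _ r1_sq).
  by rewrite (recip_quadratic _ r2_sq) !mulrA.
have [lam [? ? ? ? [i0 [max_i0 lam_i0]]]] := five_roots h14 h4 h3 h23 h2 roots.
exists lam; split => //; exists i0; split => //.
rewrite lam_i0 /x1 /r1; have -> : (2 * s + q) ^+ 2 - 4 = 9 * s ^+ 2 + 4 * t * s + 4 * s * q.
  by rewrite sqrrD q_sq; ring.
by field.
Qed.

Unset Implicit Arguments.

Theorem mainTheorem14 (R : realType) (d : nat) (m : nat -> nat)
  (hd : (1 <= d)%N)
  (hpos : forall k : nat, (k.+1 < 2 * d)%N -> (0 < m k)%N) :
  let M : 'M[R]_5 := mC R *m W5 R d m *m mE R in
  let t : R := \tr (W1 R d m) in
  let s : R := antitr (W1 R d m) in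
  let q : R := Num.sqrt (5 * s ^+ 2 + 4 * t * s + 4) in
  exists lam : 'I_5 -> R,
    [/\ injective lam,
        (forall i, eigenvalue M (lam i)),
        (forall a : R, eigenvalue M a -> exists i, a = lam i),
        injective (fun i => `|lam i|) &
        exists i0 : 'I_5,
          (forall i, `|lam i| <= `|lam i0|) /\
          lam i0 = s + q / 2 + Num.sqrt (9 * s ^+ 2 + 4 * t * s + 4 * s * q) / 2].
Proof.
have m0_gt0 : (0 < m 0%N)%N.
  by apply: hpos; case: (d) hd => // d' _; rewrite mulnS leq_addr.
move=> M t s q.
have [[detW a_ge1 e_ge1 b_ge0 c_ge0] b_ge1] := W1_pos R hd m0_gt0.
have s_ge1 : 1 <= s by rewrite /s /antitr; lra.
have t_ge2 : 2 <= t by rewrite /t trace_mx2; lra.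
apply: spectrum_charQ => // z.
by rewrite eigenvalue_det /M W5_lift (char_CWE _ detW).
Qed.
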